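(* Let $p:[0,\infty)\to[0,1]$ be log-convex, strictly decreasing, and twice continuously differentiable on $[0,\infty)$, and for $\alpha\in(0,1]$ let $h(x)=(-\log p(x))^{\alpha}$. If $\alpha\in(0,1)$, then $h$ is strictly concave on $[0,\infty)$. Moreover, $h$ is concave on $[0,\infty)$ for every $\alpha\in(0,1]$.
   Context: Here $p$ is the attack success probability on an edge of an attack graph as a function of the security investment $x$ on that edge, and $\alpha$ is the parameter of the Prelec probability weighting function $w(p)=\exp[-(-\log p)^{\alpha}]$. *)

From Stdlib Require Import Reals.
From Coquelicot Require Import Coquelicot.
Open Scope R_scope.

Definition nonneg (x : R) : Prop := 0 <= x.

(* Real power with the convention 0^a = 0 (a > 0 in all uses), and
   x^a = exp (a ln x) for x > 0. *)
Definition rpow (x a : R) : R :=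
  if Req_EM_T x 0 then 0 else Rpower x a.

Definition convex_on_nonneg (f : R -> R) : Prop :=
  forall x y t, 0 <= x -> 0 <= y -> 0 <= t <= 1 ->
    f (t * x + (1 - t) * y) <= t * f x + (1 - t) * f y.

Definition concave_on_nonneg (f : R -> R) : Prop :=
  forall x y t, 0 <= x -> 0 <= y -> 0 <= t <= 1 ->
    t * f x + (1 - t) * f y <= f (t * x + (1 - t) * y).

Definition strictly_concave_on_nonneg (f : R -> R) : Prop :=
  forall x y t, 0 <= x -> 0 <= y -> x <> y -> 0 < t < 1 ->
    t * f x + (1 - t) * f y < f (t * x + (1 - t) * y).

Definition log_convex_on_nonneg (p : R -> R) : Prop :=
  (forall x, 0 <= x -> 0 < p x) /\ convex_on_nonneg (fun x => ln (p x)).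

Definition strictly_decreasing_on_nonneg (p : R -> R) : Prop :=
  forall x y, 0 <= x -> x < y -> p y < p x.

Definition deriv_on_nonneg (f f' : R -> R) : Prop :=
  (forall x, 0 < x -> is_derive f x (f' x)) /\
  filterlim (fun t => (f t - f 0) / t) (at_right 0) (locally (f' 0)).

Definition continuous_on_nonneg (f : R -> R) : Prop :=
  (forall x, 0 < x -> continuous f x) /\
  filterlim f (at_right 0) (locally (f 0)).

Definition C2_on_nonneg (f : R -> R) : Prop :=
  exists f1 f2 : R -> R,
    deriv_on_nonneg f f1 /\ deriv_on_nonneg f1 f2 /\ continuous_on_nonneg f2.

(* The map g := -ln o p is nonnegative (as p <= 1), concave (as p is
   log-convex) and strictly increasing (as p is strictly decreasing), and
   h = phi o g with phi w := w^alpha.  For alpha in (0,1], phi is concave and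
   nondecreasing on [0,oo), so the composition is concave; for alpha < 1, phi
   is strictly concave and g is injective, so the composition is strictly
   concave.  Concavity of phi comes from its tangent lines, which reduce to
   the convexity inequality exp (a L) < a exp L + 1 - a for L <> 0, a < 1. *)

From Stdlib Require Import Reals Lra Psatz.
Open Scope R_scope.

(* Multiply 1 + (1-a) L < exp ((1-a) L) by a, and 1 - a L <= exp (- a L) by
   1 - a: the right-hand sides add up to (a exp L + 1 - a) / exp (a L). *)
Lemma exp_scale_lt a L : 0 < a < 1 -> L <> 0 -> exp (a * L) < a * exp L + (1 - a).
Proof.
  intros Ha HL.
  assert (EL : exp L = exp (a * L) * exp ((1 - a) * L))
    by (rewrite <- exp_plus; f_equal; ring).
  assert (E1 : 1 = exp (a * L) * exp (- (a * L)))
    by (rewrite <- exp_plus, <- exp_0; f_equal; ring).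
  assert (HaL : (1 - a) * L <> 0)
    by (intro H; apply Rmult_integral in H; destruct H; lra).
  pose proof (exp_ineq1 _ HaL).
  pose proof (exp_ineq1_le (- (a * L))).
  pose proof (exp_pos (a * L)).
  assert (a * exp ((1 - a) * L) + (1 - a) * exp (- (a * L)) > 1) by nra.
  rewrite EL; rewrite E1 at 2; nra.
Qed.

Lemma rpow_0 a : rpow 0 a = 0.
Proof. unfold rpow; destruct (Req_EM_T 0 0); [reflexivity | lra]. Qed.

Lemma rpow_exp w a : 0 < w -> rpow w a = exp (a * ln w).
Proof. intros Hw; unfold rpow; destruct (Req_EM_T w 0); [lra | reflexivity]. Qed.

Lemma rpow_1 w : 0 <= w -> rpow w 1 = w.
Proof.
  intros Hw; destruct (Req_dec w 0) as [-> | Hw0]; [apply rpow_0 |].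
  rewrite rpow_exp, Rmult_1_l, exp_ln; lra.
Qed.

Lemma rpow_nonneg w a : 0 <= rpow w a.
Proof.
  unfold rpow; destruct (Req_EM_T w 0); [lra |].
  unfold Rpower; left; apply exp_pos.
Qed.

Lemma rpow_le_compat a u v : 0 < a -> 0 <= u <= v -> rpow u a <= rpow v a.
Proof.
  intros Ha Huv. destruct (Req_dec u 0) as [-> | Hu].
  - rewrite rpow_0; apply rpow_nonneg.
  - rewrite !rpow_exp by lra.
    destruct (Req_dec u v) as [-> | Hneq]; [lra |].
    pose proof (ln_increasing u v ltac:(lra) ltac:(lra)).
    left; apply exp_increasing; nra.
Qed.

Lemma rpow_div_scale a m w : 0 < m -> 0 < w ->
  rpow w a = rpow m a * exp (a * ln (w / m)).
Proof.
  intros Hm Hw. rewrite !rpow_exp, <- exp_plus by lra. f_equal.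
  unfold Rdiv; rewrite ln_mult, ln_Rinv by (try apply Rinv_0_lt_compat; lra). ring.
Qed.

Lemma rpow_tangent_lt a m w : 0 < a < 1 -> 0 < m -> 0 <= w -> w <> m ->
  rpow w a < rpow m a + a * rpow m a / m * (w - m).
Proof.
  intros Ha Hm Hw Hwm.
  assert (Hpos : 0 < rpow m a) by (rewrite rpow_exp by lra; apply exp_pos).
  replace (rpow m a + a * rpow m a / m * (w - m))
    with (rpow m a * (a * (w / m) + (1 - a))) by (field; lra).
  destruct (Req_dec w 0) as [-> | Hw0].
  - rewrite rpow_0. unfold Rdiv. rewrite Rmult_0_l, Rmult_0_r. nra.
  - assert (Hwm_pos : 0 < w / m) by (apply Rdiv_lt_0_compat; lra).
    assert (Hln : ln (w / m) <> 0).
    { rewrite <- ln_1. intros E. apply Hwm.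
      apply ln_inv in E; [| assumption | lra].
      replace w with (w / m * m) by (field; lra). rewrite E; ring. }
    rewrite (rpow_div_scale a m w) by lra.
    apply Rmult_lt_compat_l; [assumption |].
    rewrite <- (exp_ln (w / m)) at 2 by assumption.
    now apply exp_scale_lt.
Qed.

Lemma rpow_tangent_le a m w : 0 < a <= 1 -> 0 < m -> 0 <= w ->
  rpow w a <= rpow m a + a * rpow m a / m * (w - m).
Proof.
  intros Ha Hm Hw.
  destruct (Req_dec w m) as [-> | Hwm]; [lra |].
  destruct (Req_dec a 1) as [-> | Ha1].
  - rewrite !rpow_1 by lra. field_simplify; lra.
  - left; apply rpow_tangent_lt; lra.
Qed.

Lemma concave_on_nonneg_of_tangents (f : R -> R) :
  (forall m, 0 < m -> exists s, forall w, 0 <= w -> f w <= f m + s * (w - m)) ->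
  concave_on_nonneg f.
Proof.
  intros Htan x y t Hx Hy Ht.
  set (m := t * x + (1 - t) * y).
  destruct (Req_dec m 0) as [Hm0 | Hm0].
  - (* a null convex combination of nonnegative points puts all its weight on 0 *)
    assert (Hx0 : t = 0 \/ x = 0) by (unfold m in Hm0; nra).
    assert (Hy0 : t = 1 \/ y = 0) by (unfold m in Hm0; nra).
    fold m; rewrite Hm0.
    destruct Hx0 as [-> | ->], Hy0 as [Ht1 | ->]; subst; try lra;
      replace m with 0 in * by (unfold m; ring); ring_simplify; lra.
  - assert (Hm : 0 < m) by (unfold m in *; nra).
    destruct (Htan m Hm) as [s Hs].
    pose proof (Rmult_le_compat_l t _ _ ltac:(lra) (Hs x Hx)).
    pose proof (Rmult_le_compat_l (1 - t) _ _ ltac:(lra) (Hs y Hy)).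
    assert (t * (x - m) + (1 - t) * (y - m) = 0) by (unfold m; ring).
    nra.
Qed.

Lemma strictly_concave_on_nonneg_of_tangents (f : R -> R) :
  (forall m, 0 < m -> exists s, forall w, 0 <= w -> w <> m -> f w < f m + s * (w - m)) ->
  strictly_concave_on_nonneg f.
Proof.
  intros Htan x y t Hx Hy Hxy Ht.
  set (m := t * x + (1 - t) * y).
  assert (Hm : 0 < m) by (unfold m; destruct (Req_dec x 0); nra).
  assert (Hxm : x <> m) by (unfold m; intro E; apply Hxy; nra).
  assert (Hym : y <> m) by (unfold m; intro E; apply Hxy; nra).
  destruct (Htan m Hm) as [s Hs].
  pose proof (Rmult_lt_compat_l t _ _ ltac:(lra) (Hs x Hx Hxm)).
  pose proof (Rmult_lt_compat_l (1 - t) _ _ ltac:(lra) (Hs y Hy Hym)).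
  assert (t * (x - m) + (1 - t) * (y - m) = 0) by (unfold m; ring).
  nra.
Qed.

Lemma rpow_concave a : 0 < a <= 1 -> concave_on_nonneg (fun w => rpow w a).
Proof.
  intros Ha. apply concave_on_nonneg_of_tangents. intros m Hm.
  exists (a * rpow m a / m). intros w Hw. now apply rpow_tangent_le.
Qed.

Lemma rpow_strictly_concave a : 0 < a < 1 -> strictly_concave_on_nonneg (fun w => rpow w a).
Proof.
  intros Ha. apply strictly_concave_on_nonneg_of_tangents. intros m Hm.
  exists (a * rpow m a / m). intros w Hw Hwm. now apply rpow_tangent_lt.
Qed.

Section Composition.

Variables (phi g : R -> R).
Hypothesis phi_mono : forall u v, 0 <= u <= v -> phi u <= phi v.
Hypothesis g_nonneg : forall x, 0 <= x -> 0 <= g x.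
Hypothesis g_concave : concave_on_nonneg g.

Lemma concave_on_nonneg_comp :
  concave_on_nonneg phi -> concave_on_nonneg (fun x => phi (g x)).
Proof.
  intros Hphi x y t Hx Hy Ht.
  pose proof (g_nonneg x Hx). pose proof (g_nonneg y Hy).
  eapply Rle_trans; [now apply Hphi |].
  apply phi_mono. split; [nra | now apply g_concave].
Qed.

Lemma strictly_concave_on_nonneg_comp :
  strictly_concave_on_nonneg phi ->
  (forall x y, 0 <= x -> 0 <= y -> g x = g y -> x = y) ->
  strictly_concave_on_nonneg (fun x => phi (g x)).
Proof.
  intros Hphi g_inj x y t Hx Hy Hxy Ht.
  pose proof (g_nonneg x Hx). pose proof (g_nonneg y Hy).
  eapply Rlt_le_trans.
  - apply Hphi; [assumption | assumption | intros E | assumption]. now apply Hxy, g_inj.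
  - apply phi_mono. split; [nra | apply g_concave; auto; lra].
Qed.

End Composition.

Lemma neg_ln_nonneg y : 0 < y <= 1 -> 0 <= - ln y.
Proof.
  intros [Hy [Hlt | ->]].
  - pose proof (ln_increasing _ _ Hy Hlt). rewrite ln_1 in *. lra.
  - rewrite ln_1. lra.
Qed.

Lemma neg_ln_concave (p : R -> R) :
  convex_on_nonneg (fun x => ln (p x)) -> concave_on_nonneg (fun x => - ln (p x)).
Proof. intros Hconv x y t Hx Hy Ht. pose proof (Hconv x y t Hx Hy Ht). simpl in *. lra. Qed.

Lemma neg_ln_inj (p : R -> R) :
  (forall x, 0 <= x -> 0 < p x) -> strictly_decreasing_on_nonneg p ->
  forall x y, 0 <= x -> 0 <= y -> - ln (p x) = - ln (p y) -> x = y.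
Proof.
  intros p_pos p_decr x y Hx Hy E.
  destruct (Rtotal_order x y) as [Hlt | [Heq | Hlt]]; [exfalso | exact Heq | exfalso].
  - pose proof (ln_increasing _ _ (p_pos y ltac:(lra)) (p_decr x y Hx Hlt)). lra.
  - pose proof (ln_increasing _ _ (p_pos x ltac:(lra)) (p_decr y x Hy Hlt)). lra.
Qed.

Theorem lemma1 (p : R -> R) :
  (forall x, 0 <= x -> 0 <= p x <= 1) ->
  log_convex_on_nonneg p ->
  strictly_decreasing_on_nonneg p ->
  C2_on_nonneg p ->
  (forall alpha : R, 0 < alpha < 1 ->
     strictly_concave_on_nonneg (fun x => rpow (- ln (p x)) alpha)) /\
  (forall alpha : R, 0 < alpha <= 1 ->
     concave_on_nonneg (fun x => rpow (- ln (p x)) alpha)).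
Proof.
  intros p_range [p_pos p_logconvex] p_decr _.
  assert (g_nonneg : forall x, 0 <= x -> 0 <= - ln (p x)).
  { intros x Hx. apply neg_ln_nonneg. split; [apply p_pos | apply p_range]; assumption. }
  assert (g_concave := neg_ln_concave p p_logconvex).
  split; intros a Ha.
  - apply (strictly_concave_on_nonneg_comp (fun w => rpow w a)).
    + intros u v Huv; apply rpow_le_compat; lra.
    + exact g_nonneg.
    + exact g_concave.
    + now apply rpow_strictly_concave.
    + now apply neg_ln_inj.
  - apply (concave_on_nonneg_comp (fun w => rpow w a)).
    + intros u v Huv; apply rpow_le_compat; lra.
    + exact g_nonneg.
    + exact g_concave.
    + now apply rpow_concave.
Qed.
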